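(* Let $\mathcal{R},\mathcal{R}',\mathcal{C},\mathcal{C}'$ be partitions of $\{1,\ldots,n\}$ such that $\mathcal{R}'$ is finer than $\mathcal{R}$ and $\mathcal{C}'$ is finer than $\mathcal{C}$. Then $U^{\mathcal{R}\times\mathcal{C}'}$ and $U^{\mathcal{R}'\times\mathcal{C}}$ intersect orthogonally in $\mathbb{R}^{S_n}$ (with the standard inner product), and \[ U^{\mathcal{R}\times\mathcal{C}'}\cap U^{\mathcal{R}'\times\mathcal{C}}=U^{\mathcal{R}\times\mathcal{C}}. \]
   Context: $S_n$ is the group of permutations of $\{1,\ldots,n\}$. A partition $\mathcal{Z}=(Z_1,\ldots,Z_s)$ is finer than $\mathcal{W}=(W_1,\ldots,W_t)$ if every $Z_i$ is contained in some $W_j$. For partitions $\mathcal{R}=(R_i)$, $\mathcal{C}=(C_j)$ of $\{1,\ldots,n\}$, the product partition of the $n\times n$ board is $\mathcal{R}\times\mathcal{C}=(R_i\times C_j)$, and for $\pi\in S_n$ its marginal is the matrix $|\pi_{\mathcal{R}\times\mathcal{C}}|=(t_{ij})$ with $t_{ij}=|\{s:(s,\pi(s))\in R_i\times C_j\}|$. $U^{\mathcal{B}}=\{v\in\mathbb{R}^{S_n}: |\pi_{\mathcal{B}}|=|\sigma_{\mathcal{B}}|\Rightarrow v(\pi)=v(\sigma)\}$. Subspaces $U,V$ intersect orthogonally if the orthogonal projection of $U$ onto $V$ equals $U\cap V$ (equivalently, the orthogonal projections onto $U$ and $V$ commute). *)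

From HB Require Import structures.
From mathcomp Require Import all_boot all_order all_algebra all_fingroup.
Set Implicit Arguments. Unset Strict Implicit. Unset Printing Implicit Defensive.
Import Order.TTheory GRing.Theory Num.Theory.
Local Open Scope ring_scope.

Definition vecS (R : realFieldType) (n : nat) := {ffun {perm 'I_n} -> R}.

Definition dotS (R : realFieldType) (n : nat) (u v : vecS R n) : R :=
  \sum_(s : {perm 'I_n}) u s * v s.

Definition finer (n : nat) (Zp Wp : {set {set 'I_n}}) : Prop :=
  forall Z, Z \in Zp -> exists2 W, W \in Wp & Z \subset W.

(* Entry (A,B) of the marginal |pi_{R x C}|: number of s with (s, pi s) in A x B. *)
Definition marg (n : nat) (pi : {perm 'I_n}) (A B : {set 'I_n}) : nat :=
  #|[set s | (s \in A) && (pi s \in B)]|.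

Definition same_marg (n : nat) (Rp Cp : {set {set 'I_n}}) (pi sigma : {perm 'I_n}) : Prop :=
  forall A B, A \in Rp -> B \in Cp -> marg pi A B = marg sigma A B.

Definition Usp (R : realFieldType) (n : nat) (Rp Cp : {set {set 'I_n}}) (v : vecS R n) : Prop :=
  forall pi sigma, same_marg Rp Cp pi sigma -> v pi = v sigma.

Definition is_orth_proj (R : realFieldType) (n : nat) (V : vecS R n -> Prop) (u v : vecS R n) : Prop :=
  V v /\ forall w, V w -> dotS (u - v) w = 0.

Definition orth_intersect (R : realFieldType) (n : nat) (U V : vecS R n -> Prop) : Prop :=
  forall x, (exists2 u, U u & is_orth_proj V u x) <-> (U x /\ V x).

From HB Require Import structures.
From mathcomp Require Import all_boot all_order all_algebra all_fingroup.
Import Order.TTheory GRing.Theory Num.Theory.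
Local Open Scope ring_scope.
Set Implicit Arguments. Unset Strict Implicit. Unset Printing Implicit Defensive.

(* For a partition P of {1..n} let young P be the Young subgroup
   of permutations fixing every block of P.  Two permutations have the same
   P x Q marginal exactly when they lie in the same double coset
   young P * pi * young Q, so U^{P x Q} is the space of vectors invariant under
   left multiplication by young P and right multiplication by young Q
   (Usp_young).  Refining a partition shrinks its Young subgroup
   (young_finer), so the intersection formula is immediate: left invariance
   comes from R, right invariance from C.
   For orthogonality, take u in U^{R x C'} and average it over right
   multiplication by young C.  The average y stays left invariant under
   young R, is right invariant under young C, and u - y is orthogonal to every
   right young C-invariant vector (dotS_ravg).  Hence y is the orthogonal
   projection of u onto U^{R' x C}; by uniqueness of orthogonal projections
   any projection x of u equals y, which lies in U^{R x C}. *)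

Lemma count_enum_card (T : finType) (a : pred T) : count a (enum T) = #|a|.
Proof. by rewrite -sum1_count -sum1_card big_enum_cond. Qed.

Section YoungSubgroups.

Variable n : nat.
Implicit Types (P Q : {set {set 'I_n}}) (pi sigma a b : {perm 'I_n}).

Definition young P : {set {perm 'I_n}} :=
  [set a : {perm 'I_n} | [forall A in P, forall s, (a s \in A) == (s \in A)]].

Lemma youngP P a :
  reflect (forall A s, A \in P -> (a s \in A) = (s \in A)) (a \in young P).
Proof.
rewrite inE; apply: (iffP forall_inP) => [Ha A s /Ha /forallP /(_ s) /eqP //|Ha A /Ha HA].
by apply/forallP => s; rewrite HA.
Qed.

Lemma young_group_set P : group_set (young P).
Proof.
apply/group_setP; split; first by apply/youngP => A s _; rewrite perm1.
move=> a b /youngP Ha /youngP Hb; apply/youngP => A s HA.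
by rewrite permM Hb // Ha.
Qed.

Canonical young_group P := group (young_group_set P).

Lemma pblock_partitionE P A s :
  partition P [set: 'I_n] -> A \in P -> (s \in A) = (pblock P s == A).
Proof.
case/and3P => /eqP covP trivP _ HA; apply/idP/eqP => [sA|<-].
  exact: def_pblock.
by rewrite mem_pblock covP inE.
Qed.

Lemma young_pblockP P a : partition P [set: 'I_n] ->
  reflect (forall s, pblock P (a s) = pblock P s) (a \in young P).
Proof.
move=> hP; have covP : cover P = [set: 'I_n] by case/and3P: hP => /eqP.
apply: (iffP (youngP P a)) => [Ha s | Ha A s HA].
  have PsP : pblock P s \in P by rewrite pblock_mem // covP inE.
  apply/eqP; rewrite -(pblock_partitionE _ hP PsP) Ha //.
  by rewrite mem_pblock covP inE.
by rewrite !(pblock_partitionE _ hP HA) Ha.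
Qed.

Lemma young_finer P P' : partition P [set: 'I_n] -> partition P' [set: 'I_n] ->
  finer P' P -> young P' \subset young P.
Proof.
move=> hP hP' hfin; apply/subsetP => a /(young_pblockP _ hP') Ha.
apply/(young_pblockP _ hP) => s.
have trivP : trivIset P by case/and3P: hP.
have covP' : cover P' = [set: 'I_n] by case/and3P: hP' => /eqP.
have ZP' : pblock P' s \in P' by rewrite pblock_mem // covP' inE.
have [W WP ZW] := hfin _ ZP'.
have inW t : pblock P' t = pblock P' s -> t \in W.
  by move=> Et; apply: (subsetP ZW); rewrite -Et mem_pblock covP' inE.
by rewrite (def_pblock trivP WP (inW _ (Ha s))) (def_pblock trivP WP (inW _ erefl)).
Qed.

Lemma marg_mull P pi a A B : a \in young P -> A \in P ->
  marg (a * pi)%g A B = marg pi A B.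
Proof.
move=> /youngP Ha HA; rewrite /marg -[RHS](card_preimset _ (@perm_inj _ a)).
by apply: eq_card => s; rewrite !inE permM Ha.
Qed.

Lemma marg_mulr Q pi b A B : b \in young Q -> B \in Q ->
  marg (pi * b)%g A B = marg pi A B.
Proof.
by move=> /youngP Hb HB; apply: eq_card => s; rewrite !inE permM Hb.
Qed.

Definition bsig P Q pi (s : 'I_n) := (pblock P s, pblock Q (pi s)).

Lemma card_bsig P Q pi A B :
  partition P [set: 'I_n] -> partition Q [set: 'I_n] -> A \in P -> B \in Q ->
  #|[pred s | bsig P Q pi s == (A, B)]| = marg pi A B.
Proof.
move=> hP hQ HA HB; apply: eq_card => s.
by rewrite !inE /bsig xpair_eqE -(pblock_partitionE _ hP HA) -(pblock_partitionE _ hQ HB).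
Qed.

Lemma same_marg_bsig P Q pi sigma :
  partition P [set: 'I_n] -> partition Q [set: 'I_n] -> same_marg P Q pi sigma ->
  perm_eq [tuple bsig P Q sigma i | i < n] [tuple bsig P Q pi i | i < n].
Proof.
move=> hP hQ hm; apply/allP => -[A B] _; apply/eqP.
rewrite /= !count_map -enumT !count_enum_card.
have [/andP [HA HB]|notPQ] := boolP ((A \in P) && (B \in Q)).
  by rewrite !card_bsig // hm.
have covP : cover P = [set: 'I_n] by case/and3P: hP => /eqP.
have covQ : cover Q = [set: 'I_n] by case/and3P: hQ => /eqP.
have bsig_out rho s : (bsig P Q rho s == (A, B)) = false.
  apply/negbTE/eqP; rewrite /bsig => -[EA EB]; move: notPQ; rewrite -EA -EB.
  by rewrite !pblock_mem ?covP ?covQ ?inE.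
by apply: eq_card => s; rewrite !inE !bsig_out.
Qed.

Lemma same_marg_double_coset P Q pi sigma :
  partition P [set: 'I_n] -> partition Q [set: 'I_n] -> same_marg P Q pi sigma ->
  exists a b, [/\ a \in young P, b \in young Q & sigma = (a * pi * b)%g].
Proof.
move=> hP hQ hm; have /tuple_permP [p Ep] := same_marg_bsig hP hQ hm.
have Esig s : bsig P Q sigma s = bsig P Q pi (p s).
  have := congr1 (fun t => nth (bsig P Q sigma s) t s) Ep.
  by rewrite -!tnth_nth !tnth_mktuple.
exists p, (pi^-1 * p^-1 * sigma)%g; split.
- by apply/(young_pblockP _ hP) => s; case: (Esig s).
- apply/(young_pblockP _ hQ) => t; set s := (p^-1 (pi^-1 t))%g.
  have Et : t = pi (p s) by rewrite /s !permKV.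
  by rewrite !permM -/s; case: (Esig s) => _ ->; rewrite -Et.
- by rewrite !mulgA mulgK mulgV mul1g.
Qed.

End YoungSubgroups.

Section Invariance.

Variables (R : realFieldType) (n : nat).
Implicit Types (G H : {set {perm 'I_n}}) (u v w x y : vecS R n).

Definition linv G v := forall a pi, a \in G -> v (a * pi)%g = v pi.
Definition rinv H v := forall pi b, b \in H -> v (pi * b)%g = v pi.

Lemma linv_sub G G' v : G' \subset G -> linv G v -> linv G' v.
Proof. by move=> /subsetP sG Hv a pi /sG; apply: Hv. Qed.

Lemma rinv_sub H H' v : H' \subset H -> rinv H v -> rinv H' v.
Proof. by move=> /subsetP sH Hv pi b /sH; apply: Hv. Qed.

Lemma Usp_young (P Q : {set {set 'I_n}}) v :
  partition P [set: 'I_n] -> partition Q [set: 'I_n] ->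
  Usp P Q v <-> linv (young P) v /\ rinv (young Q) v.
Proof.
move=> hP hQ; split => [Hv | [Hl Hr] pi sigma hm].
  split=> [a pi Ha | pi b Hb]; apply: esym; apply: Hv => A B HA HB.
    by rewrite (marg_mull _ _ Ha HA).
  by rewrite (marg_mulr _ _ Hb HB).
have [a [b [Ha Hb ->]]] := same_marg_double_coset hP hQ hm.
by rewrite Hr // Hl.
Qed.

Lemma Usp_subr (P Q : {set {set 'I_n}}) v w :
  Usp P Q v -> Usp P Q w -> Usp P Q (v - w).
Proof. by move=> Hv Hw pi sigma hm; rewrite !ffunE (Hv _ _ hm) (Hw _ _ hm). Qed.

Lemma dotSB u v w : dotS (u - v) w = dotS u w - dotS v w.
Proof. by rewrite /dotS -sumrB; apply: eq_bigr => s _; rewrite !ffunE mulrBl. Qed.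

Lemma dotS_self_eq0 v : dotS v v = 0 -> v = 0.
Proof.
move=> v0; apply/ffunP => s; rewrite ffunE; apply/eqP; rewrite -[_ == 0]orbb -mulf_eq0.
apply/eqP; apply: (@psumr_eq0P _ _ predT (fun s => v s * v s)) => // t _.
by rewrite -expr2 sqr_ge0.
Qed.

Lemma orth_proj_unique (V : vecS R n -> Prop) u x y :
  (forall v w, V v -> V w -> V (v - w)) ->
  is_orth_proj V u x -> is_orth_proj V u y -> x = y.
Proof.
move=> subV [Vx ox] [Vy oy]; apply/eqP; rewrite -subr_eq0; apply/eqP.
apply: dotS_self_eq0.
have Exy : x - y = (u - y) - (u - x) by rewrite opprB [u - y + _]addrC addrA addrNK.
have Vxy : V (x - y) := subV _ _ Vx Vy.
by rewrite {1}Exy dotSB ox // oy // subrr.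
Qed.

Section Averaging.

Variable H : {group {perm 'I_n}}.

Definition ravg u : vecS R n :=
  [ffun pi => (#|H|%:R)^-1 * \sum_(h in H) u (pi * h)%g].

Lemma ravg_rinv u : rinv H (ravg u).
Proof.
move=> pi b Hb; rewrite !ffunE; congr (_ * _).
rewrite [RHS](reindex_inj (mulgI b)) /=.
by apply: eq_big => [h|h _]; rewrite ?groupMl ?mulgA.
Qed.

Lemma ravg_linv G u : linv G u -> linv G (ravg u).
Proof.
move=> Hu a pi Ha; rewrite !ffunE; congr (_ * _).
by apply: eq_bigr => h _; rewrite -mulgA Hu.
Qed.

Lemma dotS_ravg u w : rinv H w -> dotS (ravg u) w = dotS u w.
Proof.
move=> Hw; rewrite /dotS.
under eq_bigr => pi _ do rewrite ffunE -mulrA mulr_suml.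
rewrite -mulr_sumr exchange_big /=.
rewrite (eq_bigr (fun _ => \sum_s u s * w s)) => [|h Hh].
  have H0 : (#|H|%:R : R) != 0 by rewrite pnatr_eq0 -lt0n cardG_gt0.
  by rewrite sumr_const -[X in _ * X]mulr_natl mulrA mulVf // mul1r.
rewrite [RHS](reindex_inj (mulIg h)) /=.
by apply: eq_bigr => pi _; rewrite Hw.
Qed.

End Averaging.

End Invariance.

Theorem lemma2 (R : realFieldType) (n : nat)
  (Rp Rp' Cp Cp' : {set {set 'I_n}})
  (hR : partition Rp [set: 'I_n]) (hR' : partition Rp' [set: 'I_n])
  (hC : partition Cp [set: 'I_n]) (hC' : partition Cp' [set: 'I_n])
  (hRR : finer Rp' Rp) (hCC : finer Cp' Cp) :
  orth_intersect (@Usp R n Rp Cp') (@Usp R n Rp' Cp) /\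
  (forall v : vecS R n, (@Usp R n Rp Cp' v /\ @Usp R n Rp' Cp v) <-> @Usp R n Rp Cp v).
Proof.
have sR := young_finer hR hR' hRR; have sC := young_finer hC hC' hCC.
(* Intersection: left invariance comes from Rp, right invariance from Cp. *)
have capE (v : vecS R n) : Usp Rp Cp' v /\ Usp Rp' Cp v <-> Usp Rp Cp v.
  split=> [[/(Usp_young _ hR hC') [Hl _] /(Usp_young _ hR' hC) [_ Hr]] |].
    exact/(Usp_young _ hR hC).
  move=> /(Usp_young _ hR hC) [Hl Hr]; split; apply/Usp_young => //.
    by split; [|apply: rinv_sub Hr].
  by split; [apply: linv_sub Hl|].
(* A projection x of u onto U^{Rp' x Cp} is the right young Cp-average of u. *)
split=> // x; split=> [[u /(Usp_young _ hR hC') [Hl _] projx] | [Ux Vx]].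
  pose y := ravg (young_group Cp) u.
  have projy : is_orth_proj (Usp Rp' Cp) u y.
    split=> [|w /(Usp_young _ hR' hC) [_ Hw]]; last by rewrite dotSB dotS_ravg ?subrr.
    apply/Usp_young => //; split; last exact: ravg_rinv.
    by apply: linv_sub sR _; apply: ravg_linv.
  rewrite (orth_proj_unique (@Usp_subr R n Rp' Cp) projx projy); apply/capE.
  by apply/Usp_young => //; split; [apply: ravg_linv | apply: ravg_rinv].
exists x => //; split=> // w _.
by rewrite subrr /dotS big1 // => s _; rewrite ffunE mul0r.
Qed.
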